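(* Let $p<q$ be coprime positive integers. Define $\mu:\mathbb Z^3\to\mathbb Z^3$ by $\mu(d_0,d_1,d_j)=(d_0-pd_1+qd_j,\;d_1-d_j,\;pd_1-qd_j)$, let $\Lambda=\mu(\mathbb Z_{\ge0}^3)$, and for $(n,c)\in\mathbb Z^2$ such that $(n,c,\omega)\in\Lambda$ for some $\omega$, let $\omega_{(n,c)}=\min\{\omega\in\mathbb Z:(n,c,\omega)\in\Lambda\}$. Then for every $(n,c,\omega)\in\Lambda$, one has $n+\omega<q-p$ if and only if $\omega=\omega_{(n,c)}$.
   Context: The minimum $\omega_{(n,c)}$ exists whenever the set is nonempty (for $(d_0,d_1,d_j)\in\mathbb Z_{\ge 0}^3$ with $\mu(d_0,d_1,d_j)=(n,c,\omega)$ one has $d_0=n+\omega\ge0$). Here $\mu$ records, for a monomial $X_0^{d_0}X_1^{d_1}X_j^{d_j}$ in $\mathbb C[X_0,X_1,X_j]$ ($j\in\{3,4\}$), its $\mathbb C^*$-weight $n$, the difference $c=d_1-d_j$ and an auxiliary weight $\omega$. *)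

From Stdlib Require Import ZArith Lia.
Open Scope Z_scope.

Definition mu (p q : Z) (d : Z * Z * Z) : Z * Z * Z :=
  let '(d0, d1, dj) := d in
  (d0 - p * d1 + q * dj, d1 - dj, p * d1 - q * dj).

Definition in_Lambda (p q : Z) (v : Z * Z * Z) : Prop :=
  exists d0 d1 dj : Z, 0 <= d0 /\ 0 <= d1 /\ 0 <= dj /\ mu p q (d0, d1, dj) = v.

Definition is_omega_min (p q n c w : Z) : Prop :=
  in_Lambda p q (n, c, w) /\
  forall w' : Z, in_Lambda p q (n, c, w') -> w <= w'.

(* Writing d1 = c + t with t = dj, the elements of Lambda above (n, c) are
   w = p c - (q - p) t with t >= 0, c + t >= 0, and d0 = n + w >= 0.  This
   fibre is an arithmetic progression of step q - p bounded below by -n, and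
   the step t -> t + 1 stays in it exactly when n + w >= q - p. *)
From Stdlib Require Import ZArith Lia.
Open Scope Z_scope.

Lemma in_LambdaP (p q n c w : Z) :
  in_Lambda p q (n, c, w) <->
  0 <= n + w /\ exists t, 0 <= t /\ 0 <= c + t /\ w = p * c - (q - p) * t.
Proof.
  split.
  - intros [d0 [d1 [dj [H0 [H1 [Hj E]]]]]].
    injection E as E0 E1 Ew.
    assert (Hd1 : d1 = c + dj) by lia.
    subst d1.
    split; [lia|].
    exists dj; lia.
  - intros [Hd0 [t [Ht [Hct Ew]]]].
    exists (n + w), (c + t), t.
    repeat split; try lia.
    unfold mu; f_equal; [f_equal|]; lia.
Qed.

Lemma in_Lambda_ge0 (p q n c w : Z) :
  in_Lambda p q (n, c, w) -> 0 <= n + w.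
Proof. now intros [H _]%in_LambdaP. Qed.

Lemma in_Lambda_step_down (p q n c w : Z) :
  in_Lambda p q (n, c, w) -> q - p <= n + w ->
  in_Lambda p q (n, c, w - (q - p)).
Proof.
  intros [_ [t [Ht [Hct Ew]]]]%in_LambdaP Hstep.
  apply in_LambdaP.
  split; [lia|].
  exists (t + 1); lia.
Qed.

Lemma in_Lambda_gap (p q n c w w' : Z) :
  p < q -> in_Lambda p q (n, c, w) -> in_Lambda p q (n, c, w') ->
  w' < w -> w' <= w - (q - p).
Proof.
  intros Hpq [_ [t [_ [_ Ew]]]]%in_LambdaP [_ [t' [_ [_ Ew']]]]%in_LambdaP Hlt.
  assert (Htt' : t + 1 <= t') by nia.
  assert ((q - p) * (t + 1) <= (q - p) * t') by (apply Z.mul_le_mono_nonneg_l; lia).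
  lia.
Qed.

Theorem lemma4p15 (p q : Z) (hp : 0 < p) (hpq : p < q) (hcop : Z.gcd p q = 1) :
  forall n c w : Z, in_Lambda p q (n, c, w) ->
    (n + w < q - p <-> is_omega_min p q n c w).
Proof.
  intros n c w Hw.
  split.
  - intros Hlt.
    split; [exact Hw|].
    intros w' Hw'.
    destruct (Z_lt_le_dec w' w) as [Hgt|Hle]; [|exact Hle].
    pose proof (in_Lambda_gap p q n c w w' hpq Hw Hw' Hgt).
    pose proof (in_Lambda_ge0 p q n c w' Hw').
    lia.
  - intros [_ Hmin].
    destruct (Z_lt_le_dec (n + w) (q - p)) as [Hlt|Hge]; [exact Hlt|].
    specialize (Hmin _ (in_Lambda_step_down p q n c w Hw Hge)).
    lia.
Qed.
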